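(* Let $G$ be a finite bipartite graph with vertex classes $A$ and $B$, and let $\lambda\geq 1$ be a real number. Then at least one of the following holds: (1) there is a vertex $v\in B$ and sets $A'\subseteq N(v)$ and $B'\subseteq B\setminus\{v\}$ such that $d(G[A',B'])\geq \lambda$; (2) there is a spanning subgraph $H\subseteq G$ with $d(H)\geq d(G)/(\lambda+1)$ and $d_H(x,y)\leq \lambda$ for all distinct $x,y\in B$.
   Context: $N(v)$ is the neighbourhood of $v$ in $G$. For disjoint vertex sets $A',B'$, $G[A',B']$ is the bipartite subgraph of $G$ with vertex set $A'\cup B'$ consisting of all edges of $G$ between $A'$ and $B'$. $d(\cdot)$ denotes average degree, $d(F)=2e(F)/|V(F)|$. For vertices $x,y$, the codegree $d_H(x,y)$ is the number of common neighbours of $x$ and $y$ in $H$. A spanning subgraph has the same vertex set as $G$. *)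

From HB Require Import structures.
From mathcomp Require Import all_boot all_order all_algebra.
From mathcomp Require Import reals.
Set Implicit Arguments. Unset Strict Implicit. Unset Printing Implicit Defensive.
Import Order.TTheory GRing.Theory Num.Theory.
Local Open Scope ring_scope.

(* A finite bipartite graph with vertex classes A and B (finite types, the
   vertex set is the disjoint union A + B) is given by its edge set
   G : {set A * B}; the edge {a,b} is the pair (a,b). *)

Section Bip.
Variables (A B : finType).

Definition nbhB (G : {set A * B}) (v : B) : {set A} := [set a | (a, v) \in G].

Definition bip_edges (G : {set A * B}) (A' : {set A}) (B' : {set B})
  : {set A * B} := [set p in G | (p.1 \in A') && (p.2 \in B')].

(* average degree 2 e(F) / |V(F)| (0 if F has no vertices) *)
Definition avgdeg {R : realType} (e v : nat) : R := (2 * e)%:R / v%:R.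

Definition d_induced {R : realType} (G : {set A * B}) (A' : {set A})
  (B' : {set B}) : R := avgdeg #|bip_edges G A' B'| (#|A'| + #|B'|).

Definition d_graph {R : realType} (H : {set A * B}) : R :=
  avgdeg #|H| (#|A| + #|B|).

Definition codeg (H : {set A * B}) (x y : B) : nat :=
  #|[set a | ((a, x) \in H) && ((a, y) \in H)]|.

End Bip.

From HB Require Import structures.
From mathcomp Require Import all_boot all_order all_algebra.
From mathcomp Require Import reals.
From mathcomp Require Import lra ring.
Import Order.TTheory GRing.Theory Num.Theory.
Local Open Scope ring_scope.

(* Call distinct x, y in B heavy if their codegree exceeds lambda, and let
   Y(v) be the set of heavy partners of v.  Every y in Y(v) has more than
   lambda neighbours in N(v), so e(G[N(v), Y(v)]) >= lambda |Y(v)|; hence if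
   e(G[N(v), Y(v)]) > lambda |N(v)| for some v, then G[N(v), Y(v)] has average
   degree at least lambda.  Otherwise, for each a in A take, by Caro-Wei, a set
   I(a) of pairwise light vertices in N(a) with |I(a)| >= sum_(u in N(a))
   1/(t(a,u)+1), where t(a,u) counts the heavy partners of u in N(a), and keep
   only the edges from each a to I(a).  Heavy pairs then have no common
   neighbour and light pairs have codegree at most lambda, while double
   counting and the convexity of t |-> 1/(t+1) give e(H) >= e(G)/(lambda+1). *)

Lemma ler_inv_natS (R : numFieldType) (m n : nat) :
  (m <= n)%N -> n.+1%:R^-1 <= m.+1%:R^-1 :> R.
Proof. by move=> le_mn; rewrite lef_pV2 ?posrE ?ltr0Sn // ler_nat. Qed.

Section CaroWei.
#[local] Set Implicit Arguments.
#[local] Unset Strict Implicit.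
Variables (T : finType) (r : rel T).
Hypotheses (r_sym : symmetric r) (r_irr : irreflexive r).

Definition deg_in (S : {set T}) (u : T) : nat := #|[set y in S | r u y]|.

Definition cnbh_in (S : {set T}) (v : T) : {set T} := v |: [set y in S | r v y].

Definition stable (I : {set T}) : Prop := {in I &, forall x y, ~~ r x y}.

Lemma deg_in_subset (S S' : {set T}) (u : T) :
  S' \subset S -> (deg_in S' u <= deg_in S u)%N.
Proof.
move=> sub; apply/subset_leq_card/subsetP => y; rewrite !inE.
by case/andP => /(subsetP sub) -> ->.
Qed.

Lemma card_cnbh_in (S : {set T}) (v : T) : #|cnbh_in S v| = (deg_in S v).+1.
Proof. by rewrite cardsU1 inE r_irr andbF. Qed.

Lemma cnbh_in_subset (S : {set T}) (v : T) : v \in S -> cnbh_in S v \subset S.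
Proof.
move=> vS; rewrite subUset sub1set vS.
by apply/subsetP => y; rewrite inE => /andP[].
Qed.

Lemma sum_inv_deg_cnbh_le1 (R : numFieldType) (S : {set T}) (v : T) :
  v \in S -> (forall u, u \in S -> deg_in S v <= deg_in S u)%N ->
  \sum_(u in cnbh_in S v) (deg_in S u).+1%:R^-1 <= 1 :> R.
Proof.
move=> vS v_min.
apply: (@le_trans _ _ (\sum_(u in cnbh_in S v) (deg_in S v).+1%:R^-1)).
  apply: ler_sum => u /(subsetP (cnbh_in_subset vS)) uS.
  exact/ler_inv_natS/v_min.
by rewrite sumr_const card_cnbh_in -[leLHS]mulr_natr mulVf ?pnatr_eq0.
Qed.

(* Greedily take a vertex of minimum degree and delete its closed
   neighbourhood; deleting vertices only raises the remaining weights. *)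
Lemma caro_wei (R : numFieldType) (S : {set T}) :
  exists I : {set T}, [/\ I \subset S, stable I &
    \sum_(u in S) (deg_in S u).+1%:R^-1 <= #|I|%:R :> R].
Proof.
have [n] := ubnP #|S|; elim: n S => // n IH S; rewrite ltnS => card_S.
have [->|[v0 v0S]] := set_0Vmem S.
  by exists set0; rewrite sub0set big_set0 cards0; split=> // x y; rewrite inE.
case: (arg_minnP (deg_in S) v0S) => v vS v_min.
have {}vS : v \in S by [].
set S' := S :\: cnbh_in S v.
have vS' : v \notin S' by rewrite !inE eqxx.
have S'S : S' \subset S by apply: subsetDl.
have [|I [IS' I_stable I_large]] := IH S'.
  apply: leq_trans card_S; apply/proper_card/properP; split=> //.
  by exists v.
have vI : v \notin I by apply: contra vS' => /(subsetP IS').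
have v_nadj y : y \in I -> ~~ r v y.
  move=> /(subsetP IS'); rewrite !inE negb_or => /andP[/andP[_]].
  by case: (y \in S).
exists (v |: I); split.
- by rewrite subUset sub1set vS (subset_trans IS' S'S).
- move=> x y; rewrite !inE => /predU1P[->|xI] /predU1P[->|yI].
  + by rewrite r_irr.
  + exact: v_nadj.
  + by rewrite r_sym v_nadj.
  + exact: I_stable.
rewrite cardsU1 vI natrD (big_setID (cnbh_in S v)) /=.
rewrite (setIidPr (cnbh_in_subset vS)); apply: lerD.
  exact: sum_inv_deg_cnbh_le1.
apply: le_trans I_large; apply: ler_sum => u _.
exact/ler_inv_natS/deg_in_subset.
Qed.

End CaroWei.

Lemma inv_add1_ge_tangent (R : realFieldType) (l t : R) : 0 <= l -> 0 <= t ->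
  (2 * l + 1 - t) / (l + 1) ^+ 2 <= (t + 1)^-1.
Proof.
move=> l_ge0 t_ge0; rewrite -subr_ge0.
have l1_neq0 : l + 1 != 0 by rewrite lt0r_neq0 // ltr_wpDl.
have t1_neq0 : t + 1 != 0 by rewrite lt0r_neq0 // ltr_wpDl.
have -> : (t + 1)^-1 - (2 * l + 1 - t) / (l + 1) ^+ 2
          = (l - t) ^+ 2 / ((t + 1) * (l + 1) ^+ 2).
  by field; rewrite t1_neq0 l1_neq0.
by rewrite divr_ge0 ?sqr_ge0 // mulr_ge0 ?sqr_ge0 // addr_ge0.
Qed.

(* Convexity of t |-> 1/(t+1), through its tangent line at t = l. *)
Lemma sum_inv_add1_ge (R : realFieldType) (I : finType) (N : {set I})
    (t : I -> R) (l : R) :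
  0 <= l -> (forall i, 0 <= t i) -> \sum_(i in N) t i <= l * #|N|%:R ->
  #|N|%:R / (l + 1) <= \sum_(i in N) (t i + 1)^-1.
Proof.
move=> l_ge0 t_ge0 sum_t_le.
have tangent_sum : \sum_(i in N) (2 * l + 1 - t i) / (l + 1) ^+ 2
                   <= \sum_(i in N) (t i + 1)^-1.
  by apply: ler_sum => i _; apply: inv_add1_ge_tangent.
apply: le_trans tangent_sum.
rewrite -mulr_suml sumrB sumr_const.
have l1_neq0 : l + 1 != 0 by rewrite lt0r_neq0 // ltr_wpDl.
have -> : #|N|%:R / (l + 1) = #|N|%:R * (l + 1) / (l + 1) ^+ 2 by field.
rewrite ler_wpM2r ?invr_ge0 ?sqr_ge0 // -mulr_natr.
lra.
Qed.

Section BipartiteCounting.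
#[local] Set Implicit Arguments.
#[local] Unset Strict Implicit.
Variables (A B : finType).
Implicit Types (G H : {set A * B}) (I : A -> {set B}).

Definition nbhA G (a : A) : {set B} := [set b | (a, b) \in G].

Lemma big_edges_nbhA (R : Type) (idx : R) (op : Monoid.com_law idx) G
    (F : A -> B -> R) :
  \big[op/idx]_(p in G) F p.1 p.2
  = \big[op/idx]_a \big[op/idx]_(b in nbhA G a) F a b.
Proof. by rewrite pair_big_dep; apply: eq_bigl => -[a b]; rewrite !inE. Qed.

Lemma big_edges_nbhB (R : Type) (idx : R) (op : Monoid.com_law idx) G
    (F : A -> B -> R) :
  \big[op/idx]_(p in G) F p.1 p.2
  = \big[op/idx]_b \big[op/idx]_(a in nbhB G b) F a b.
Proof.
rewrite big_edges_nbhA (exchange_big_dep predT) //.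
by apply: eq_bigr => b _; apply: eq_bigl => a; rewrite !inE.
Qed.

Lemma card_edges_nbhA G : #|G| = (\sum_a #|nbhA G a|)%N.
Proof.
rewrite -sum1_card (big_edges_nbhA _ _ (fun _ _ => 1%N)).
by apply: eq_bigr => a _; rewrite sum1_card.
Qed.

Lemma card_edges_nbhB G : #|G| = (\sum_b #|nbhB G b|)%N.
Proof.
rewrite -sum1_card (big_edges_nbhB _ _ (fun _ _ => 1%N)).
by apply: eq_bigr => b _; rewrite sum1_card.
Qed.

Lemma card_bip_edges_nbhA G (A' : {set A}) (B' : {set B}) :
  #|bip_edges G A' B'| = (\sum_(a in A') #|nbhA G a :&: B'|)%N.
Proof.
rewrite card_edges_nbhA [RHS]big_mkcond; apply: eq_bigr => a _.
case: ifP => aA'; last first.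
  by apply/eqP; rewrite cards_eq0; apply/eqP/setP => b; rewrite !inE aA' andbF.
by apply: eq_card => b; rewrite !inE aA'.
Qed.

Lemma card_bip_edges_nbhB G (A' : {set A}) (B' : {set B}) :
  #|bip_edges G A' B'| = (\sum_(b in B') #|nbhB G b :&: A'|)%N.
Proof.
rewrite card_edges_nbhB [RHS]big_mkcond; apply: eq_bigr => b _.
case: ifP => bB'; last first.
  by apply/eqP; rewrite cards_eq0; apply/eqP/setP => a; rewrite !inE bB' !andbF.
by apply: eq_card => a; rewrite !inE bB' andbT.
Qed.

Lemma codegE G (x y : B) : codeg G x y = #|nbhB G x :&: nbhB G y|.
Proof. by apply: eq_card => a; rewrite !inE. Qed.

Lemma d_induced_ge (R : realType) G (A' : {set A}) (B' : {set B}) (l : R) :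
  0 <= l -> l * #|A'|%:R < #|bip_edges G A' B'|%:R ->
  l * #|B'|%:R <= #|bip_edges G A' B'|%:R ->
  l <= d_induced G A' B'.
Proof.
move=> l_ge0 A'_sparse B'_sparse.
have A'_gt0 : (0 < #|A'|)%N.
  rewrite lt0n; apply: contraTneq A'_sparse => /eqP.
  rewrite cards_eq0 => /eqP A'0.
  by rewrite card_bip_edges_nbhA A'0 big_set0 cards0 mulr0 ltxx.
rewrite /d_induced /avgdeg ler_pdivlMr ?ltr0n ?ltn_addr // natrM natrD.
lra.
Qed.

Definition select_edges G (I : A -> {set B}) : {set A * B} :=
  [set p in G | p.2 \in I p.1].

Lemma select_edges_subset G I : select_edges G I \subset G.
Proof. by apply/subsetP => p; rewrite inE => /andP[]. Qed.

Lemma card_select_edges G I : (forall a, I a \subset nbhA G a) ->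
  #|select_edges G I| = (\sum_a #|I a|)%N.
Proof.
move=> I_sub; rewrite card_edges_nbhA; apply: eq_bigr => a _.
apply: eq_card => b; rewrite !inE /= andb_idl //.
by move=> /(subsetP (I_sub a)); rewrite inE.
Qed.

Lemma codeg_select_edges_le G I (x y : B) :
  (codeg (select_edges G I) x y <= codeg G x y)%N.
Proof.
apply/subset_leq_card/subsetP => a; rewrite !inE /=.
by case/andP => /andP[-> _] /andP[-> _].
Qed.

Lemma codeg_select_edges_eq0 G I (x y : B) :
  (forall a, x \in I a -> y \notin I a) -> codeg (select_edges G I) x y = 0%N.
Proof.
move=> xy_apart; apply/eqP; rewrite cards_eq0; apply/eqP/setP => a.
rewrite !inE /=; apply/negP => /andP[/andP[_ xI] /andP[_ yI]].
by move: (xy_apart a xI); rewrite yI.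
Qed.

Lemma d_graph_div_le (R : realType) G H (c : R) :
  #|G|%:R / c <= #|H|%:R -> d_graph G / c <= d_graph H.
Proof.
move=> GH; rewrite /d_graph /avgdeg !natrM mulrAC -(mulrA 2 _ c^-1).
by rewrite ler_wpM2r ?invr_ge0 ?ler0n // ler_wpM2l.
Qed.

End BipartiteCounting.

Section HeavyPairs.
#[local] Set Implicit Arguments.
#[local] Unset Strict Implicit.
Variables (R : realType) (A B : finType) (G : {set A * B}) (lambda : R).
Hypothesis lambda_ge0 : 0 <= lambda.

Definition heavy (x y : B) : bool := (x != y) && (lambda < (codeg G x y)%:R).

Definition heavy_nbrs (v : B) : {set B} := [set y | heavy v y].

Lemma heavy_sym : symmetric heavy.
Proof. by move=> x y; rewrite /heavy eq_sym !codegE setIC. Qed.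

Lemma heavy_irr : irreflexive heavy.
Proof. by move=> x; rewrite /heavy eqxx. Qed.

Lemma heavy_nbrs_subset (v : B) : heavy_nbrs v \subset [set~ v].
Proof. by apply/subsetP => y; rewrite !inE eq_sym => /andP[]. Qed.

Lemma heavy_nbrs_edges_ge (v : B) :
  lambda * #|heavy_nbrs v|%:R <= #|bip_edges G (nbhB G v) (heavy_nbrs v)|%:R.
Proof.
rewrite card_bip_edges_nbhB natr_sum mulr_natr -sumr_const.
by apply: ler_sum => y; rewrite inE /heavy codegE setIC => /andP[_ /ltW].
Qed.

Lemma deg_heavy_nbhA (a : A) (v : B) :
  deg_in heavy (nbhA G a) v = #|nbhA G a :&: heavy_nbrs v|.
Proof. by apply: eq_card => y; rewrite !inE. Qed.

Hypothesis heavy_nbrs_sparse : forall v : B,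
  #|bip_edges G (nbhB G v) (heavy_nbrs v)|%:R <= lambda * #|nbhB G v|%:R.

(* Reindex the sum by the B-endpoint v of each edge: over the neighbours a
   of v the degrees of v add up to e(G[N(v), Y(v)]) <= lambda |N(v)|, so by
   convexity the weights at v add up to at least |N(v)| / (lambda + 1). *)
Lemma edges_div_le_sum_weights :
  #|G|%:R / (lambda + 1)
  <= \sum_a \sum_(u in nbhA G a) (deg_in heavy (nbhA G a) u).+1%:R^-1.
Proof.
pose w a u : R := (deg_in heavy (nbhA G a) u).+1%:R^-1.
rewrite -(big_edges_nbhA _ _ w) (big_edges_nbhB _ _ w) card_edges_nbhB.
rewrite natr_sum mulr_suml; apply: ler_sum => v _; rewrite /w.
under eq_bigr do rewrite -natr1.
apply: sum_inv_add1_ge => //.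
rewrite -natr_sum (eq_bigr _ (fun a _ => deg_heavy_nbhA a v)).
by rewrite -card_bip_edges_nbhA.
Qed.

Lemma sparse_subgraph_exists : exists H : {set A * B},
  [/\ H \subset G, d_graph G / (lambda + 1) <= d_graph H &
      forall x y : B, x != y -> (codeg H x y)%:R <= lambda].
Proof.
have [I /all_and3[I_sub I_stable I_large]] :=
  fin_all_exists (fun a => caro_wei heavy_sym heavy_irr R (nbhA G a)).
exists (select_edges G I); split.
- exact: select_edges_subset.
- apply: d_graph_div_le; rewrite card_select_edges // natr_sum.
  apply: le_trans edges_div_le_sum_weights _.
  by apply: ler_sum => a _; apply: I_large.
- move=> x y x_neq_y; have [xy_heavy | xy_light] := boolP (heavy x y).
    rewrite codeg_select_edges_eq0 ?ler0n // => a xI.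
    by apply: contraL xy_heavy => yI; apply: I_stable xI yI.
  apply: (@le_trans _ _ (codeg G x y)%:R).
    by rewrite ler_nat codeg_select_edges_le.
  by move: xy_light; rewrite /heavy x_neq_y -leNgt.
Qed.

End HeavyPairs.

Theorem lemma5 (R : realType) (A B : finType) (G : {set A * B})
  (lambda : R) (hlambda : 1 <= lambda) :
  (exists (v : B) (A' : {set A}) (B' : {set B}),
      [/\ A' \subset nbhB G v, B' \subset [set~ v] &
          lambda <= d_induced G A' B'])
  \/
  (exists H : {set A * B},
      [/\ H \subset G,
          d_graph G / (lambda + 1) <= d_graph H &
          forall x y : B, x != y -> (codeg H x y)%:R <= lambda]).
Proof.
have lambda_ge0 : 0 <= lambda by apply: le_trans hlambda.
case: (boolP [exists v, lambda * #|nbhB G v|%:R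
                        < #|bip_edges G (nbhB G v) (heavy_nbrs G lambda v)|%:R]).
  case/existsP => v dense; left; exists v, (nbhB G v), (heavy_nbrs G lambda v).
  split; [exact: subxx | exact: heavy_nbrs_subset |].
  exact: d_induced_ge dense (heavy_nbrs_edges_ge _ _ _).
rewrite negb_exists => /forallP sparse; right.
by apply: sparse_subgraph_exists => // v; rewrite leNgt sparse.
Qed.
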